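(* Let $G$ be a non-chordal graph, $H$ a hole of $G$, and $S$ the equivalence class of $\sim_G$ containing $V(H)$. Let $u,v$ be two nonadjacent vertices of $H$. If $G+uv$ has a hole $H^*$ that is not a hole of $G$, then $V(H^* )\subseteq S$.
   Context: All graphs are finite and simple. A hole of $G$ is an induced cycle of length at least $4$; $G$ is chordal if it has no hole. $\mathcal H(G)$ is the set of holes of $G$ and $\Omega(G)=\bigcup_{H\in\mathcal H(G)}V(H)$. The relation $\sim_G$ on $\Omega(G)$ is defined by $x\sim_G y$ iff $x,y$ lie on a common hole, or there is a sequence $H_1,\dots,H_t$ of distinct holes of $G$ with $x\in V(H_1)$, $y\in V(H_t)$ and $H_i,H_{i+1}$ sharing a vertex for each $i$; it is an equivalence relation and the vertex set of each hole lies in a single class. *)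

From mathcomp Require Import all_boot.
Set Implicit Arguments. Unset Strict Implicit. Unset Printing Implicit Defensive.

Definition simple_graph (T : finType) (e : rel T) : Prop :=
  symmetric e /\ irreflexive e.

Definition add_edge (T : finType) (e : rel T) (u v : T) : rel T :=
  fun x y => [|| e x y, (x == u) && (y == v) | (x == v) && (y == u)].

(* A hole of G: an induced cycle of length >= 4, given by the cyclic
   sequence s of its (distinct) vertices: two vertices of s are adjacent
   in G iff they are cyclically consecutive in s. *)
Definition is_hole (T : finType) (e : rel T) (s : seq T) : Prop :=
  [/\ uniq s, 4 <= size s &
      forall (x0 : T) (i j : nat), i < size s -> j < size s ->
        e (nth x0 s i) (nth x0 s j) =
        (j == i.+1 %% size s) || (i == j.+1 %% size s)].

(* x ~_G y : there is a sequence of holes H1 (= H0 below), ..., Ht with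
   x in H1, y in Ht and consecutive holes sharing a vertex (t = 1 is the
   case of a common hole). *)
Definition hole_equiv (T : finType) (e : rel T) (x y : T) : Prop :=
  exists (H0 : seq T) (hs : seq (seq T)),
    [/\ is_hole e H0, (forall K, K \in hs -> is_hole e K),
        x \in H0, y \in last H0 hs &
        path (fun A B : seq T => has (fun z => z \in B) A) H0 hs].

From mathcomp Require Import all_boot zify.
From Stdlib Require Import Classical.
Set Implicit Arguments. Unset Strict Implicit. Unset Printing Implicit Defensive.

(* As [Hs] is not a hole of [G], it passes through the new edge [uv]; deleting this edge
   leaves an induced path [p 0, ..., p k] of [G] from [u] to [v], with [k >= 3], covering
   [Hs]. So it suffices to put every vertex [w = p i] outside [H] on a hole of [G] that
   meets [H]; reversing the path if needed, [w] is not adjacent to [p 0].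
   Walk around [H] in both directions from [p 0] up to the first vertex adjacent to [w]
   or equal to [p k]. If [p k] comes first on one side, the path from [p i.-1] back to
   [p 0], that arc of [H], and the path from [p k] back to [p i.+1] form a walk avoiding
   all other neighbours of [w]; a shortest subwalk closes a hole with [w], and this hole
   meets [H] because along the path it cannot get past [w]. Otherwise the first
   neighbours of [w] on the two sides are separated by [p k], hence nonadjacent, and the
   arc of [H] between them through [p 0] closes a hole with [w]. *)

Lemma modnS_lt x m : x < m -> x.+1 %% m = if x.+1 == m then 0 else x.+1.
Proof. by move=> ltxm; case: eqP => [->|ne]; rewrite ?modnn // modn_small //; lia. Qed.

Lemma ex_first_pos (P : pred nat) m : 0 < m -> P m ->
  exists s, [/\ 0 < s, s <= m, P s & forall t, 0 < t < s -> ~~ P t].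
Proof.
move=> m_pos Pm; have ex_pos : exists s, (0 < s) && P s by exists m; rewrite m_pos.
case: (ex_minnP ex_pos) => s /andP[s_pos Ps] s_min; exists s; split=> //.
  by apply: s_min; rewrite m_pos.
move=> t /andP[t_pos lts]; apply/negP => Pt.
by have := s_min t; rewrite t_pos Pt => /(_ isT); lia.
Qed.

Lemma modnSml a m : (a %% m).+1 = a.+1 %[mod m].
Proof. by rewrite -addn1 modnDml addn1. Qed.

Section Walks.

Variables (T : finType) (e : rel T).
Hypotheses (e_sym : symmetric e) (e_irr : irreflexive e).

Definition walk_in (X : T -> Prop) (f : nat -> T) (L : nat) : Prop :=
  (forall t, t < L -> e (f t) (f t.+1)) /\ (forall t, t <= L -> X (f t)).

Definition induced_path (g : nat -> T) (L : nat) : Prop :=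
  forall t t', t <= L -> t' <= L ->
    (g t = g t' -> t = t') /\ e (g t) (g t') = (t' == t.+1) || (t == t'.+1).

Lemma induced_path_lt g L :
  (forall t t', t < t' -> t' <= L -> g t <> g t' /\ e (g t) (g t') = (t' == t.+1)) ->
  induced_path g L.
Proof.
move=> lt_ok t t' leL leL'; case: (ltngtP t t') => [lt|gt|->].
- by have [neq ->] := lt_ok _ _ lt leL'; split=> [/neq|] //; lia.
- by have [neq adj] := lt_ok _ _ gt leL; split=> [/esym/neq|] //; rewrite e_sym adj; lia.
- by rewrite e_irr; split=> //; lia.
Qed.

Lemma induced_path_rev g L : induced_path g L -> induced_path (fun t => g (L - t)) L.
Proof.
move=> ig t t' leL leL'; have [inj adj] := ig (L - t) (L - t') (leq_subr _ _) (leq_subr _ _).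
by split=> [/inj|]; rewrite ?adj; lia.
Qed.

Lemma walk_in_prefix X f L t : walk_in X f L -> t <= L -> walk_in X f t.
Proof. by move=> [fe fX] leL; split=> u lt; [apply: fe | apply: fX]; lia. Qed.

Lemma walk_in_skip X f L t t' : walk_in X f L -> t.+1 < t' <= L -> e (f t) (f t') ->
  walk_in X (fun x => if x <= t then f x else f (x + (t' - t.+1))) (L - (t' - t.+1)).
Proof.
move=> [fe fX] /andP[lt leL] chord; split=> x ltx.
  case: (leqP x.+1 t) => [lex|]; first by rewrite ltnW //; apply: fe; lia.
  case: (leqP x t) => [lex ltx'|ltx' _]; last by rewrite addSn; apply: fe; lia.
  have -> : x = t by lia.
  by rewrite (_ : t.+1 + _ = t') //; lia.
by case: leqP => _; apply: fX; lia.
Qed.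

(* A shortest subwalk is induced: a repeated endpoint lets us truncate, a chord or a
   repeated inner vertex lets us skip ahead. *)
Lemma induced_subpath X f L : walk_in X f L ->
  exists L' g, [/\ walk_in X g L', g 0 = f 0, g L' = f L & induced_path g L'].
Proof.
elim/ltn_ind: L f => L IH f wf.
have [[t [ltL ftL]] | no_rep] := classic (exists t, t < L /\ f t = f L).
  have [L' [g [wg g0 gL ig]]] := IH t ltL f (walk_in_prefix wf (ltnW ltL)).
  by exists L', g; rewrite gL ftL.
have [[t [t' [range chord]]] | no_chord] :=
  classic (exists t t', t.+1 < t' <= L /\ e (f t) (f t')).
  have ltL : L - (t' - t.+1) < L by lia.
  have [L' [g [wg g0 gL ig]]] := IH _ ltL _ (walk_in_skip wf range chord).
  exists L', g; split=> //; rewrite gL leqNgt ifF; first by congr f; lia.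
  by apply/negbTE; lia.
exists L, f; split=> //; apply: induced_path_lt => t t' lt leL.
have adj : e (f t) (f t') = (t' == t.+1).
  case: eqP => [->|ne]; first by apply: wf.1; lia.
  by apply/negP => ch; apply: no_chord; exists t, t'; split=> //; lia.
split=> // ftt'; case: (ltngtP t' L) => [lt'||eqL]; last 2 first.
- lia.
- by apply: no_rep; exists t; rewrite -eqL.
by apply: no_chord; exists t, t'.+1; rewrite ftt'; split; [lia | apply: wf.1].
Qed.

Lemma hole_of_induced_path g L w : induced_path g L -> 1 < L ->
  (forall t, t <= L -> w <> g t) ->
  (forall t, t <= L -> e w (g t) = (t == 0) || (t == L)) ->
  is_hole e (w :: mkseq g L.+1).
Proof.
move=> ig ltL w_out w_adj.
have size_hole : size (w :: mkseq g L.+1) = L.+2 by rewrite /= size_map size_iota.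
split; rewrite ?size_hole.
- rewrite cons_uniq; apply/andP; split.
    apply/negP => /(nthP w) [j]; rewrite size_mkseq => ltj.
    by rewrite nth_mkseq // => /esym; apply: w_out.
  by apply/mkseq_uniqP => i j; rewrite !inE => lti ltj /(ig i j lti ltj).1 ->.
- by [].
move=> x0 [|i] [|j] lti ltj /=.
- by rewrite e_irr modn_small.
- rewrite nth_mkseq // w_adj // (modn_small (_ : 1 < L.+2)) // modnS_lt //.
  by case: ifP; lia.
- rewrite nth_mkseq // e_sym w_adj // (modn_small (_ : 1 < L.+2)) // modnS_lt //.
  by case: ifP; lia.
rewrite !nth_mkseq // (ig i j _ _).2 ?modnS_lt; try lia.
by case: (i.+2 =P L.+2); case: (j.+2 =P L.+2); lia.
Qed.

Definition walk_cat (f1 f2 : nat -> T) L1 t := if t <= L1 then f1 t else f2 (t - L1).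

Lemma walk_in_cat X f1 L1 f2 L2 : walk_in X f1 L1 -> walk_in X f2 L2 -> f1 L1 = f2 0 ->
  walk_in X (walk_cat f1 f2 L1) (L1 + L2).
Proof.
move=> [e1 X1] [e2 X2] joint; split=> t lt; rewrite /walk_cat.
  case: (ltngtP t L1) => [lt1|gt1|eq1]; last subst t.
  - exact: e1.
  - by rewrite subSn; [apply: e2 | ]; lia.
  - by rewrite subSnn joint; apply: e2; lia.
by case: leqP => le; [apply: X1 | apply: X2]; lia.
Qed.

Lemma walk_cat0 f1 f2 L1 : walk_cat f1 f2 L1 0 = f1 0.
Proof. by []. Qed.

Lemma walk_cat_last f1 f2 L1 L2 : f1 L1 = f2 0 -> walk_cat f1 f2 L1 (L1 + L2) = f2 L2.
Proof.
move=> joint; rewrite /walk_cat addKn; case: L2 => [|L2]; first by rewrite addn0 leqnn.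
by case: leqP => // le; lia.
Qed.

Lemma close_hole X f L w : walk_in X f L -> f 0 <> f L -> ~~ e (f 0) (f L) ->
  (forall x, X x -> x <> w /\ (e w x -> x = f 0 \/ x = f L)) -> e w (f 0) -> e w (f L) ->
  exists L' g, [/\ is_hole e (w :: mkseq g L'.+1), g 0 = f 0, g L' = f L & walk_in X g L'].
Proof.
move=> wf ne0L nadj0L X_w adj0 adjL.
have [L' [g [wg g0 gL ig]]] := induced_subpath wf.
have ltL' : 1 < L'.
  case: L' gL ig {wg} => [|[|//]] gL ig; first by rewrite -g0 -gL in ne0L.
  by rewrite -g0 -gL (ig 0 1 isT isT).2 in nadj0L.
exists L', g; split=> //; apply: hole_of_induced_path => // t leL.
  by move=> wt; apply: (X_w _ (wg.2 t leL)).1; rewrite -wt.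
apply/idP/idP => [/(X_w _ (wg.2 t leL)).2 [gt|gt] | /orP[]/eqP->]; rewrite ?g0 ?gL //.
  by have -> : t = 0 by apply: (ig t 0 leL isT).1; rewrite g0.
have -> : t = L' by apply: (ig t L' leL (leqnn _)).1; rewrite gL.
by rewrite eqxx orbT.
Qed.

End Walks.

Section CyclicOrder.

Variables (T : finType) (R : rel T).

Definition cycle_param (c : nat -> T) (n : nat) : Prop :=
  (forall x y, R (c x) (c y) = (y == x.+1 %[mod n]) || (x == y.+1 %[mod n])) /\
  (forall x y, (c x == c y) = (x == y %[mod n])).

Lemma hole_cycle_param s a : is_hole R s -> a \in s ->
  exists c, [/\ cycle_param c (size s), c 0 = a, forall t, c t \in s &
                forall z, z \in s -> exists2 t, t < size s & c t = z].
Proof.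
move=> [s_uniq s_size s_adj] a_s; set n := size s.
have n_gt0 : 0 < n by rewrite /n; lia.
exists (fun t => nth a s ((index a s + t) %% n)); split.
- split=> x y; first by rewrite s_adj ?ltn_pmod // !modnSml -!addnS !eqn_modDl.
  by rewrite nth_uniq ?ltn_pmod // eqn_modDl.
- by rewrite addn0 modn_small ?index_mem // nth_index.
- by move=> t; rewrite mem_nth ?ltn_pmod.
move=> z z_s; exists ((index z s + (n - index a s)) %% n); first exact: ltn_pmod.
have lt_a : index a s < n by rewrite index_mem.
rewrite modnDmr addnCA subnKC 1?ltnW // modnDr modn_small ?index_mem //.
exact: nth_index.
Qed.

Variables (c : nat -> T) (n : nat).
Hypothesis c_cycle : cycle_param c n.

Lemma cycle_param_shift j : cycle_param (fun x => c (j + x)) n.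
Proof. by split=> x y; rewrite (c_cycle.1, c_cycle.2) -?addnS !eqn_modDl. Qed.

Lemma cycle_param_edge x : R (c x) (c x.+1).
Proof. by rewrite c_cycle.1 eqxx. Qed.

Lemma cycle_param_addn x : c (n + x) = c x.
Proof. by apply/eqP; rewrite c_cycle.2 modnDl. Qed.

Lemma cycle_param_period : c n = c 0.
Proof. by rewrite -[n]addn0 cycle_param_addn. Qed.

Lemma cycle_param_inj x y : x < n -> y < n -> (c x == c y) = (x == y).
Proof. by move=> ltx lty; rewrite c_cycle.2 !modn_small. Qed.

Lemma cycle_param_lt x y : x < y < n ->
  R (c x) (c y) = (y == x.+1) || (x == 0) && (y == n.-1).
Proof.
move=> /andP[ltxy ltyn]; have ltxn : x < n := ltn_trans ltxy ltyn.
rewrite c_cycle.1 (modnS_lt ltyn) !modn_small //; last lia.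
by case: (y.+1 =P n); lia.
Qed.

End CyclicOrder.

Section RemoveEdge.

Variables (T : finType) (e R : rel T) (a b : T).
Hypotheses (e_sym : symmetric e) (e_irr : irreflexive e) (ab_nadj : ~~ e a b).
Hypothesis R_def : forall x y, R x y = [|| e x y, (x == a) && (y == b) | (x == b) && (y == a)].

Lemma cycle_remove_edge q n : cycle_param R q n -> 3 < n -> q 0 = a -> q n.-1 = b ->
  induced_path e q n.-1.
Proof.
move=> q_cyc n_gt3 qa qb; apply: induced_path_lt => // x y ltxy leyn.
have ltyn : y < n by lia.
have ltxn : x < n by lia.
have ltxyn : x < y < n by rewrite ltxy.
split; first by move/eqP; rewrite (cycle_param_inj q_cyc) //; lia.
have at_a z : z < n -> (q z == a) = (z == 0).
  by move=> ltz; rewrite -qa (cycle_param_inj q_cyc) //; lia.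
have at_b z : z < n -> (q z == b) = (z == n.-1).
  by move=> ltz; rewrite -qb (cycle_param_inj q_cyc) //; lia.
have := cycle_param_lt q_cyc ltxyn.
rewrite R_def !at_a // !at_b // (_ : (x == n.-1) && (y == 0) = false) ?orbF; last first.
  by apply/negbTE; lia.
case: (boolP ((x == 0) && (y == n.-1))) => [/andP[/eqP x0 /eqP yn] _ | _]; last first.
  by rewrite !orbF.
by rewrite x0 yn qa qb (negbTE ab_nadj); lia.
Qed.

End RemoveEdge.

Section AddEdge.

Variables (T : finType) (e : rel T) (u v : T).
Hypotheses (e_sym : symmetric e) (e_irr : irreflexive e) (uv_nadj : ~~ e u v).

Lemma add_edge_hole_mem s : is_hole (add_edge e u v) s -> ~ is_hole e s ->
  (u \in s) && (v \in s).
Proof.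
move=> [s_uniq s_size s_adj] not_hole.
case: (boolP ((u \in s) && (v \in s))) => // uv_out; case: not_hole.
split=> // x0 i j lti ltj; rewrite -(s_adj x0) // /add_edge.
have pair_out x y : x \in s -> y \in s -> (x == u) && (y == v) = false.
  by move=> xs ys; apply/negP => /andP[/eqP xu /eqP yv]; move: uv_out; rewrite -xu -yv xs ys.
by rewrite pair_out ?mem_nth // andbC pair_out ?mem_nth // !orbF.
Qed.

Lemma add_edge_hole_path s : is_hole (add_edge e u v) s -> u \in s -> v \in s ->
  exists p k, [/\ induced_path e p k, 3 <= k, p 0 \in [:: u; v], p k \in [:: u; v] &
                 forall x, x \in s -> exists2 t, t <= k & p t = x].
Proof.
move=> s_hole us vs; have [c [c_cyc c0 _ c_onto]] := hole_cycle_param s_hole us.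
have n_gt3 : 3 < size s by case: s_hole.
have [t ltt ctv] := c_onto v vs.
have : add_edge e u v (c 0) (c t) by rewrite c0 ctv /add_edge !eqxx orbT.
rewrite c_cyc.1 mod0n (modn_small ltt) (modn_small (_ : 1 < size s)) 1?modnS_lt //; last lia.
have [tn _ | _ /= t1] := eqVneq t.+1 (size s).
- have c_last : c (size s).-1 = v by rewrite -ctv (_ : (size s).-1 = t) //; lia.
  exists c, (size s).-1; split; rewrite ?c0 ?c_last ?inE ?eqxx ?orbT //; try lia.
    exact: (cycle_remove_edge e_sym e_irr uv_nadj (R := add_edge e u v)).
  by move=> x /c_onto [t' ltt' <-]; exists t'; first lia.
- have t_1 : t = 1 by move: t1; rewrite orbF => /eqP.
  pose q x := c (1 + x).
  have q_last : q (size s).-1 = u.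
    by rewrite /q (_ : 1 + _ = size s) ?(cycle_param_period c_cyc) //; lia.
  have q0 : q 0 = v by rewrite /q addn0 -t_1.
  exists q, (size s).-1; split; rewrite ?q0 ?q_last ?inE ?eqxx ?orbT //; try lia.
    apply: (cycle_remove_edge e_sym e_irr (R := add_edge e u v) (a := v) (b := u)) => //.
    * by rewrite e_sym.
    * by move=> x y; rewrite /add_edge; congr (_ || _); exact: orbC.
    * exact: (cycle_param_shift c_cyc 1).
  move=> x /c_onto [[|t'] ltt' <-]; first by exists (size s).-1; rewrite ?q_last.
  by exists t'; rewrite /q ?add1n //; lia.
Qed.

End AddEdge.

Definition on_hole_meeting (T : finType) (e : rel T) (H : seq T) (w : T) : Prop :=
  exists K, [/\ is_hole e K, w \in K & has (fun z => z \in H) K].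

Section HoleThroughVertex.

Variables (T : finType) (e : rel T) (H : seq T).
Hypotheses (e_sym : symmetric e) (e_irr : irreflexive e).

Lemma on_hole_meeting_closed w g L t : is_hole e (w :: mkseq g L.+1) -> t <= L ->
  g t \in H -> on_hole_meeting e H w.
Proof.
move=> K_hole leL gtH; exists (w :: mkseq g L.+1); split; rewrite ?mem_head //.
by apply/hasP; exists (g t); rewrite // inE /mkseq map_f ?orbT // mem_iota; lia.
Qed.

Lemma hole_through_arc w g L : w \notin H -> walk_in e (fun x => x \in H) g L ->
  g 0 <> g L -> ~~ e (g 0) (g L) -> e w (g 0) -> e w (g L) ->
  (forall t, 0 < t < L -> ~~ e w (g t)) -> on_hole_meeting e H w.
Proof.
move=> w_out [g_edge g_H] ne0L nadj0L adj0 adjL inner.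
pose X x := x \in H /\ (e w x -> x = g 0 \/ x = g L).
have gX : walk_in e X g L.
  split=> // t leL; split=> [|adj]; first exact: g_H.
  case: (posnP t) => [->|t_pos]; first by left.
  case: (ltngtP t L) => [ltL|gtL|->]; last by right.
  - by rewrite (negbTE (inner t _)) ?t_pos in adj.
  - lia.
have [|||||L' [g' [K_hole g'0 _ [_ g'X]]]] := close_hole e_sym e_irr (w := w) gX => //.
  by move=> x [xH x_adj]; split=> // xw; rewrite -xw xH in w_out.
by apply: (on_hole_meeting_closed K_hole (leq0n L')); rewrite g'0 g_H.
Qed.

Lemma cycle_arc_hole w c n s r : w \notin H -> cycle_param e c n -> (forall t, c t \in H) ->
  0 < s -> 0 < r -> s.+1 < n - r -> e w (c s) -> e w (c (n - r)) ->
  (forall t, t < s -> ~~ e w (c t)) -> (forall t, 0 < t < r -> ~~ e w (c (n - t))) ->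
  on_hole_meeting e H w.
Proof.
move=> w_out c_cyc cH s_pos r_pos lt_srn adj_s adj_r s_first r_first.
have c_end : c (n - r + (r + s)) = c s.
  by rewrite (_ : n - r + (r + s) = n + s) ?(cycle_param_addn c_cyc) //; lia.
apply: (@hole_through_arc w (fun t => c (n - r + t)) (r + s)) => //=; rewrite ?c_end ?addn0 //.
- by split=> t _; [rewrite addnS; exact: (cycle_param_edge c_cyc) | exact: cH].
- by apply/eqP; rewrite (cycle_param_inj c_cyc); lia.
- by rewrite e_sym (cycle_param_lt c_cyc); lia.
move=> t /andP[t_pos ltt]; case: (ltngtP t r) => [ltr|gtr|->].
- by rewrite (_ : n - r + t = n - (r - t)); [apply: r_first | ]; lia.
- by rewrite (_ : n - r + t = n + (t - r)) ?(cycle_param_addn c_cyc); [apply: s_first | ]; lia.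
- by rewrite subnK ?(cycle_param_period c_cyc); [apply: s_first | ]; lia.
Qed.

Section Detour.

Variables (p : nat -> T) (k i : nat).
Hypotheses (p_ind : induced_path e p k) (i_pos : 0 < i) (lt_ik : i < k).
Hypotheses (w_out : p i \notin H) (w_nadj0 : ~~ e (p i) (p 0)).

Let p_eq l l' : l <= k -> l' <= k -> (p l == p l') = (l == l').
Proof. by move=> lek lek'; apply/eqP/eqP => [/(p_ind lek lek').1|->]. Qed.

Let p_adj l l' : l <= k -> l' <= k -> e (p l) (p l') = (l' == l.+1) || (l == l'.+1).
Proof. by move=> lek lek'; apply: (p_ind lek lek').2. Qed.

Let detour_vertex x := (x \in H \/ exists2 l, l <= k & p l = x) /\
  x <> p i /\ (e (p i) x -> x = p i.-1 \/ x = p i.+1).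

Lemma detour_vertex_path l : l <= k -> l != i -> detour_vertex (p l).
Proof.
move=> lek ne_li; split; first by right; exists l.
split=> [/eqP|]; first by rewrite p_eq ?(ltnW lt_ik) // (negbTE ne_li).
by rewrite p_adj ?(ltnW lt_ik) // => /orP[]/eqP->; [right | left].
Qed.

Lemma detour_vertex_hole x : x \in H -> (e (p i) x -> x = p k) -> detour_vertex x.
Proof.
move=> xH adj_k; split; first by left.
split=> [xw|/[dup] /adj_k -> adj]; first by move: w_out; rewrite -xw xH.
by right; move: adj; rewrite p_adj ?(ltnW lt_ik) // => /orP[]/eqP ki; rewrite ki //; lia.
Qed.

(* Along the path, a detour starting left of [p i] stays left of it until it enters [H]. *)
Lemma detour_meets_hole g L : walk_in e detour_vertex g L ->
  g 0 = p i.-1 -> g L = p i.+1 -> exists2 t, t <= L & g t \in H.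
Proof.
move=> [g_edge g_X] g0 gL.
suff /(_ L (leqnn L)) [[t let' tH]|[l lt_li gLl]] :
    forall t, t <= L -> (exists2 t', t' <= t & g t' \in H) \/ exists2 l, l < i & g t = p l.
- by exists t.
- by move: gL; rewrite gLl => /eqP; rewrite p_eq; lia.
elim=> [_|t IH ltL]; first by right; exists i.-1; [lia | ].
case: (IH (ltnW ltL)) => [[t' let' t'H]|[l lt_li gtl]]; first by left; exists t'; lia.
have [[gH|[l' lel' gtl']] [gw _]] := g_X t.+1 ltL; first by left; exists t.+1.
right; exists l' => //.
have ne_li : l' != i by apply/eqP => li; apply: gw; rewrite -gtl' li.
by move: (g_edge t ltL); rewrite gtl -gtl' p_adj //; lia.
Qed.

Lemma path_arc_hole phi L : phi 0 = p 0 -> phi L = p k ->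
  walk_in e (fun x => x \in H) phi L -> (forall t, 0 < t < L -> ~~ e (p i) (phi t)) ->
  on_hole_meeting e H (p i).
Proof.
move=> phi0 phiL [phi_edge phi_H] inner.
have w1 : walk_in e detour_vertex (fun t => p (i.-1 - t)) i.-1.
  by split=> t le; [rewrite p_adj; lia | apply: detour_vertex_path; lia].
have w2 : walk_in e detour_vertex phi L.
  split=> // t leL; apply: detour_vertex_hole; first exact: phi_H.
  case: (posnP t) => [->|t_pos]; first by rewrite phi0 (negbTE w_nadj0).
  case: (ltngtP t L) => [ltL|gtL|->] //; last lia.
  by move=> adj; move: (inner t); rewrite t_pos ltL adj => /(_ isT).
have w3 : walk_in e detour_vertex (fun t => p (k - t)) (k - i.+1).
  by split=> t le; [rewrite p_adj; lia | apply: detour_vertex_path; lia].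
have joint1 : p (i.-1 - i.-1) = phi 0 by rewrite subnn phi0.
have joint2 : walk_cat (fun t => p (i.-1 - t)) phi i.-1 (i.-1 + L) = p (k - 0).
  by rewrite walk_cat_last // phiL subn0.
move: (walk_in_cat (walk_in_cat w1 w2 joint1) w3 joint2).
set F := walk_cat _ _ _ => wF.
have F0 : F 0 = p i.-1 by rewrite /F !walk_cat0 subn0.
have FL : F (i.-1 + L + (k - i.+1)) = p i.+1.
  by rewrite /F walk_cat_last //; congr p; lia.
have [|||||L' [g [K_hole g0 gL gw]]] := close_hole e_sym e_irr (w := p i) wF.
- by rewrite F0 FL => /eqP; rewrite p_eq; lia.
- by rewrite F0 FL p_adj; lia.
- by move=> x [_ xw]; rewrite F0 FL.
- by rewrite F0 p_adj; lia.
- by rewrite FL p_adj; lia.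
have [t leL gtH] := detour_meets_hole gw (etrans g0 F0) (etrans gL FL).
exact: on_hole_meeting_closed K_hole leL gtH.
Qed.

Lemma path_vertex_on_hole_meeting : is_hole e H -> p 0 \in H -> p k \in H ->
  on_hole_meeting e H (p i).
Proof.
move=> H_hole p0H pkH; have [c [c_cyc c0 cH c_onto]] := hole_cycle_param H_hole p0H.
have n_gt3 : 3 < size H by case: H_hole.
set n := size H in c_cyc c_onto n_gt3 *.
have [ty lt_ty cty] := c_onto _ pkH.
have ty_pos : 0 < ty by case: ty cty {lt_ty} => // /eqP; rewrite c0 p_eq //; lia.
pose hit t := e (p i) (c t) || (c t == p k).
have no_hit_adj t : ~~ hit t -> ~~ e (p i) (c t) by rewrite negb_or => /andP[].
have hit_ty : hit ty by rewrite /hit cty eqxx orbT.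
have [s [s_pos le_s hit_s s_first]] := ex_first_pos ty_pos hit_ty.
have hit_bty : hit (n - (n - ty)) by rewrite (subKn (ltnW lt_ty)).
have [|r [r_pos le_r hit_r r_first]] := @ex_first_pos (fun t => hit (n - t)) (n - ty) _ hit_bty.
  lia.
case: (eqVneq (c s) (p k)) => [csk|nsk].
  apply: (path_arc_hole (phi := c) (L := s)) => //.
    by split=> t _; [exact: cycle_param_edge c_cyc t | exact: cH].
  by move=> t /andP[t_pos lts]; apply/no_hit_adj/s_first; rewrite t_pos lts.
case: (eqVneq (c (n - r)) (p k)) => [crk|nrk].
  apply: (path_arc_hole (phi := fun t => c (n - t)) (L := r)) => //=.
  - by rewrite subn0 (cycle_param_period c_cyc).
  - split=> t ltr; last exact: cH.
    by rewrite e_sym (_ : n - t = (n - t.+1).+1) ?(cycle_param_edge c_cyc) //; lia.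
  by move=> t /andP[t_pos ltt]; apply/no_hit_adj/r_first; rewrite t_pos ltt.
have lt_s : s < ty.
  by case: (ltngtP s ty) nsk => [//|gt|eq_s]; [rewrite leqNgt gt in le_s | rewrite eq_s cty eqxx].
have lt_r : r < n - ty.
  case: (ltngtP r (n - ty)) nrk => [//|gt|eq_r]; first by rewrite leqNgt gt in le_r.
  by rewrite eq_r (subKn (ltnW lt_ty)) cty eqxx.
have adj_s : e (p i) (c s) by move: hit_s; rewrite /hit (negbTE nsk) orbF.
have adj_r : e (p i) (c (n - r)) by move: hit_r; rewrite /hit (negbTE nrk) orbF.
apply: (cycle_arc_hole w_out c_cyc cH s_pos r_pos _ adj_s adj_r).
- by clear -lt_s lt_r; lia.
- by case=> [|t] // lts; [rewrite c0 | apply/no_hit_adj/s_first].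
by move=> t /r_first /no_hit_adj.
Qed.

End Detour.

End HoleThroughVertex.

Section HoleEquivalence.

Variables (T : finType) (e : rel T) (H : seq T).
Hypotheses (e_sym : symmetric e) (e_irr : irreflexive e) (H_hole : is_hole e H).

Lemma hole_equiv_on_hole_meeting x h : on_hole_meeting e H x -> h \in H -> hole_equiv e x h.
Proof.
move=> [K [K_hole xK K_H]] hH; exists K, [:: H]; split=> //=; last by rewrite andbT.
by move=> K'; rewrite inE => /eqP->.
Qed.

Lemma induced_path_hole_equiv p k t h : induced_path e p k -> 3 <= k ->
  p 0 \in H -> p k \in H -> t <= k -> h \in H -> hole_equiv e (p t) h.
Proof.
move=> p_ind k_ge3 p0H pkH le_tk hH.
have [ptH|pt_out] := boolP (p t \in H); first by exists H, [::].
apply: hole_equiv_on_hole_meeting hH.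
have t_pos : 0 < t by case: t le_tk pt_out => // _; rewrite p0H.
have lt_tk : t < k by case: (ltngtP t k) le_tk pt_out => // ->; rewrite pkH.
have [adj0|nadj0] := boolP (e (p t) (p 0)); last first.
  exact: (path_vertex_on_hole_meeting e_sym e_irr p_ind t_pos lt_tk pt_out nadj0).
have t1 : t = 1 by move: adj0; rewrite (p_ind _ _ le_tk (leq0n k)).2; lia.
have rev_ind := induced_path_rev p_ind.
have kt : k - (k - 1) = t by lia.
rewrite -kt; apply: (path_vertex_on_hole_meeting e_sym e_irr rev_ind) => /=;
  rewrite ?subn0 ?subnn ?kt //; try lia.
by rewrite (p_ind _ _ le_tk (leqnn k)).2; lia.
Qed.

End HoleEquivalence.

Theorem proposition4p6 (T : finType) (e : rel T) (H : seq T) (u v : T)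
    (Hs : seq T) :
  simple_graph e ->
  is_hole e H ->
  u \in H -> v \in H -> u != v -> ~~ e u v ->
  is_hole (add_edge e u v) Hs ->
  ~ is_hole e Hs ->
  forall x, x \in Hs -> forall h, h \in H -> hole_equiv e x h.
Proof.
move=> [e_sym e_irr] H_hole uH vH _ uv_nadj Hs_hole not_hole x xHs h hH.
have /andP[uHs vHs] := add_edge_hole_mem Hs_hole not_hole.
have [p [k [p_ind k_ge3 p0 pk p_onto]]] := add_edge_hole_path e_sym e_irr uv_nadj Hs_hole uHs vHs.
have endH z : z \in [:: u; v] -> z \in H by rewrite !inE => /orP[]/eqP->.
have [t le_tk <-] := p_onto x xHs.
exact: (induced_path_hole_equiv e_sym e_irr H_hole p_ind k_ge3 (endH _ p0) (endH _ pk) le_tk hH).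
Qed.
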